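(* Let $(\rho_0,p_0)$ solve the TOV system on $[0,R)$ with regular centre and mass function $m_0$, let $g_0(r)=\frac{m_0+4\pi p_0r^3}{r^2[1-2m_0/r]}$, and assume $1+r g_0(r)>0$ on $[0,R)$. For a real parameter $\delta\rho_c$ define $$\delta m(r)=\frac{4\pi r^3\,\delta\rho_c}{3\,[1+r g_0(r)]^2}\exp\Bigl\{2\int_0^r g_0(s)\,\frac{1-s g_0(s)}{1+s g_0(s)}\,ds\Bigr\},\qquad \delta p(r)=-\frac{\delta m(r)}{4\pi r^3}\,\frac{1+8\pi p_0(r)r^2}{1-2m_0(r)/r}.$$ Set $m=m_0+\delta m$, $\rho=m'/(4\pi r^2)$, $p=p_0+\delta p$. Then on every interval $[0,R')\subseteq[0,R)$ on which $1-2m(r)/r>0$, the pair $(\rho,p)$ solves the TOV system with regular centre, has mass function $m$, satisfies $$\frac{m+4\pi p r^3}{r^2[1-2m/r]}=g_0(r),$$ and has central density $\rho_0(0)+\delta\rho_c$ and central pressure $p_0(0)+\delta p_c$ with $\delta p_c=-\delta\rho_c/3$. Explicitly $$\delta p(r)=\frac{\delta p_c}{[1+rg_0]^2}\,\frac{1+8\pi p_0r^2}{1-2m_0/r}\exp\Bigl\{2\int_0^r g_0\frac{1-sg_0}{1+sg_0}ds\Bigr\}.$$ Conversely, every solution of the TOV system with regular centre whose function $\frac{m+4\pi pr^3}{r^2[1-2m/r]}$ equals $g_0$ is of this form. *)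

From Stdlib Require Import Reals.
From Coquelicot Require Import Coquelicot.
Open Scope R_scope.

Definition mass (rho : R -> R) (r : R) : R :=
  4 * PI * RInt (fun s => s ^ 2 * rho s) 0 r.

Definition gfun (m p : R -> R) (r : R) : R :=
  (m r + 4 * PI * p r * r ^ 3) / (r ^ 2 * (1 - 2 * m r / r)).

(* (rho, p) solves the TOV system on [0, Rs) with regular centre, with
   central density rhoc and central pressure pc (taken as right limits at 0):
   rho, p are defined on (0, Rs), rho continuous there, p differentiable
   with p' = -(rho + p) g, 1 - 2m/r > 0, and rho, p have the finite
   limits rhoc, pc at the centre. *)
Definition TOV_regular (Rs : R) (rho p : R -> R) (rhoc pc : R) : Prop :=
  (forall r, 0 < r < Rs -> continuous rho r) /\
  filterlim rho (at_right 0) (locally rhoc) /\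
  filterlim p (at_right 0) (locally pc) /\
  (forall r, 0 < r < Rs -> 1 - 2 * mass rho r / r > 0) /\
  (forall r, 0 < r < Rs ->
     is_derive p r (- (rho r + p r) * gfun (mass rho) p r)).

Definition expfac (g : R -> R) (r : R) : R :=
  exp (2 * RInt (fun s => g s * (1 - s * g s) / (1 + s * g s)) 0 r).

Definition dmass (m0 p0 : R -> R) (drc : R) (r : R) : R :=
  4 * PI * r ^ 3 * drc / (3 * (1 + r * gfun m0 p0 r) ^ 2)
  * expfac (gfun m0 p0) r.

Definition dpres (m0 p0 : R -> R) (drc : R) (r : R) : R :=
  - dmass m0 p0 drc r / (4 * PI * r ^ 3)
  * ((1 + 8 * PI * p0 r * r ^ 2) / (1 - 2 * m0 r / r)).

Definition mpert (m0 p0 : R -> R) (drc : R) (r : R) : R :=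
  m0 r + dmass m0 p0 drc r.
Definition rhopert (m0 p0 : R -> R) (drc : R) (r : R) : R :=
  Derive (mpert m0 p0 drc) r / (4 * PI * r ^ 2).
Definition ppert (m0 p0 : R -> R) (drc : R) (r : R) : R :=
  p0 r + dpres m0 p0 drc r.

(* Keep g fixed and perturb the mass by D.  By the definition of g the pressure must then
   change by -D (1 + 2 r g) / (4 pi r^3), and with this choice the TOV equation for the
   perturbed pair fails exactly by a nonzero multiple of D' - a D, where
   a = 3/r - 2 r (g' + g^2) / (1 + r g).  The given delta m is a solution of D' = a D
   (its logarithmic derivative is a), so the forward direction is a differentiation; for
   the converse, m - m0 solves the same first-order linear equation and is therefore a
   constant multiple of delta m.  The central values come from m0 = O(r^3) and g -> 0,
   which give r a -> 3 and delta m ~ (4 pi / 3) delta rho_c r^3. *)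
From Stdlib Require Import Reals Lra.
From Coquelicot Require Import Coquelicot.
Open Scope R_scope.

Definition lim0 (f : R -> R) (l : R) := filterlim f (at_right 0) (locally l).

Lemma at_right0_lt d : 0 < d -> at_right 0 (fun x => x < d).
Proof.
  intros Hd. exists (mkposreal d Hd). intros y Hy Hy0.
  apply Rabs_def2 in Hy. unfold minus, plus, opp in Hy; simpl in Hy. lra.
Qed.

Lemma lim0_const c : lim0 (fun _ => c) c.
Proof. apply filterlim_const. Qed.

Lemma lim0_id : lim0 (fun x => x) 0.
Proof. intros P [e HP]. exists e. intros y Hy _. exact (HP y Hy). Qed.

Lemma lim0_plus f g a b : lim0 f a -> lim0 g b -> lim0 (fun x => f x + g x) (a + b).
Proof. intros Hf Hg. exact (filterlim_comp_2 f g Rplus Hf Hg (filterlim_plus a b)). Qed.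

Lemma lim0_mult f g a b : lim0 f a -> lim0 g b -> lim0 (fun x => f x * g x) (a * b).
Proof. intros Hf Hg. exact (filterlim_comp_2 f g Rmult Hf Hg (filterlim_mult a b)). Qed.

Lemma lim0_comp f k a : lim0 f a -> continuous k a -> lim0 (fun x => k (f x)) (k a).
Proof. intros Hf Hk. exact (filterlim_comp _ _ _ f k _ _ _ Hf Hk). Qed.

Lemma lim0_opp f a : lim0 f a -> lim0 (fun x => - f x) (- a).
Proof. intros Hf. exact (lim0_comp f Ropp a Hf (filterlim_opp a)). Qed.

Lemma lim0_inv f a : lim0 f a -> a <> 0 -> lim0 (fun x => / f x) (/ a).
Proof. intros Hf Ha. exact (lim0_comp f Rinv a Hf (continuous_Rinv a Ha)). Qed.

Lemma lim0_exp f a : lim0 f a -> lim0 (fun x => exp (f x)) (exp a).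
Proof. intros Hf. exact (lim0_comp f exp a Hf (continuous_exp a)). Qed.

Lemma lim0_minus f g a b : lim0 f a -> lim0 g b -> lim0 (fun x => f x - g x) (a - b).
Proof. intros; apply lim0_plus; [|apply lim0_opp]; assumption. Qed.

Lemma lim0_div f g a b : lim0 f a -> lim0 g b -> b <> 0 -> lim0 (fun x => f x / g x) (a / b).
Proof. intros; apply lim0_mult; [|apply lim0_inv]; assumption. Qed.

Lemma lim0_pow f a n : lim0 f a -> lim0 (fun x => f x ^ n) (a ^ n).
Proof. intros Hf; induction n; simpl; [apply lim0_const | apply lim0_mult; assumption]. Qed.

Lemma lim0_eq f l l' : lim0 f l -> l = l' -> lim0 f l'.
Proof. intros H <-; exact H. Qed.

Lemma lim0_ext f g l d : 0 < d -> (forall x, 0 < x < d -> f x = g x) -> lim0 f l -> lim0 g l.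
Proof.
  intros Hd E. apply filterlim_ext_loc.
  apply (filter_imp (fun x => 0 < x < d)); [exact E|].
  apply filter_and; [exists (mkposreal 1 Rlt_0_1); intros; assumption | exact (at_right0_lt d Hd)].
Qed.

Lemma lim0_unique f l l' : lim0 f l -> lim0 f l' -> l = l'.
Proof. exact (filterlim_locally_unique f l l'). Qed.

Lemma lim0_bounded f l : lim0 f l ->
  exists d, 0 < d /\ forall x, 0 < x < d -> Rabs (f x) <= Rabs l + 1.
Proof.
  intros H. destruct (proj1 (filterlim_locally f l) H (mkposreal 1 Rlt_0_1)) as [e He].
  exists e. split; [apply cond_pos|]. intros x Hx.
  assert (Hb : Rabs (f x - l) < 1).
  { apply He; [|lra]. apply Rabs_def1; unfold minus, plus, opp; simpl; lra. }
  pose proof (Rabs_triang_inv (f x) l). lra.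
Qed.

Lemma lim0_squeeze f C d : 0 < d -> (forall x, 0 < x < d -> Rabs (f x) <= C * x) -> lim0 f 0.
Proof.
  intros Hd H. apply filterlim_locally. intros eps.
  set (K := Rabs C + 1). assert (HK : 0 < K) by (pose proof (Rabs_pos C); unfold K; lra).
  assert (He : 0 < Rmin d (eps / K))
    by (apply Rmin_pos; [|apply Rdiv_lt_0_compat]; try apply cond_pos; lra).
  exists (mkposreal _ He). intros y Hy Hy0.
  apply Rabs_def2 in Hy. unfold minus, plus, opp in Hy; simpl in Hy.
  pose proof (Rmin_l d (eps / K)); pose proof (Rmin_r d (eps / K)).
  assert (HyK : K * y < eps).
  { apply (Rmult_lt_reg_l (/ K)); [apply Rinv_0_lt_compat; lra|].
    rewrite <- Rmult_assoc, Rinv_l by lra. unfold Rdiv in *. lra. }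
  change (Rabs (f y - 0) < eps). rewrite Rminus_0_r.
  pose proof (H y ltac:(lra)). pose proof (Rle_abs C). unfold K in *. nra.
Qed.

Ltac lim0_t := first [ match goal with H : lim0 ?f _ |- lim0 ?f _ => exact H end
 | lazymatch goal with
 | |- lim0 (fun x => @?f x + @?g x) _ => eapply (lim0_plus f g); [lim0_t|lim0_t]
 | |- lim0 (fun x => @?f x - @?g x) _ => eapply (lim0_minus f g); [lim0_t|lim0_t]
 | |- lim0 (fun x => @?f x * @?g x) _ => eapply (lim0_mult f g); [lim0_t|lim0_t]
 | |- lim0 (fun x => @?f x / @?g x) _ => eapply (lim0_div f g); [lim0_t|lim0_t|]
 | |- lim0 (fun x => - @?f x) _ => eapply (lim0_opp f); lim0_t
 | |- lim0 (fun x => @?f x ^ ?n) _ => eapply (lim0_pow f _ n); lim0_t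
 | |- lim0 (fun x => exp (@?f x)) _ => eapply (lim0_exp f); lim0_t
 | |- lim0 (fun x => x) _ => apply lim0_id
 | |- lim0 (fun _ => ?c) _ => apply lim0_const
 | |- _ => eassumption
 end ].

Lemma continuous_Rplus (f g : R -> R) x :
  continuous f x -> continuous g x -> continuous (fun y => f y + g y) x.
Proof. apply (continuous_plus f g). Qed.

Lemma continuous_Rmult (f g : R -> R) x :
  continuous f x -> continuous g x -> continuous (fun y => f y * g y) x.
Proof. apply (continuous_mult f g). Qed.

Lemma continuous_Ropp (f : R -> R) x : continuous f x -> continuous (fun y => - f y) x.
Proof. apply (continuous_opp f). Qed.

Lemma continuous_Rminus (f g : R -> R) x :
  continuous f x -> continuous g x -> continuous (fun y => f y - g y) x.
Proof. intros; apply continuous_Rplus; [|apply continuous_Ropp]; assumption. Qed.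

Lemma continuous_Rinv_comp (f : R -> R) x :
  continuous f x -> f x <> 0 -> continuous (fun y => / f y) x.
Proof.
  intros Hf Hx. apply (continuous_comp (U := R_UniformSpace) (V := R_UniformSpace) f Rinv);
    [exact Hf | exact (continuous_Rinv _ Hx)].
Qed.

Lemma continuous_Rdiv (f g : R -> R) x :
  continuous f x -> continuous g x -> g x <> 0 -> continuous (fun y => f y / g y) x.
Proof. intros; apply continuous_Rmult; [|apply continuous_Rinv_comp]; assumption. Qed.

Lemma continuous_Rpow (f : R -> R) n x : continuous f x -> continuous (fun y => f y ^ n) x.
Proof.
  intros Hf; induction n; simpl; [apply continuous_const | apply continuous_Rmult; assumption].
Qed.

Ltac continuous_t := lazymatch goal with
 | |- continuous (fun x => @?f x + @?g x) _ =>
     apply (continuous_Rplus f g); [continuous_t|continuous_t]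
 | |- continuous (fun x => @?f x - @?g x) _ =>
     apply (continuous_Rminus f g); [continuous_t|continuous_t]
 | |- continuous (fun x => @?f x * @?g x) _ =>
     apply (continuous_Rmult f g); [continuous_t|continuous_t]
 | |- continuous (fun x => @?f x / @?g x) _ =>
     apply (continuous_Rdiv f g); [continuous_t|continuous_t|]
 | |- continuous (fun x => - @?f x) _ => apply (continuous_Ropp f); continuous_t
 | |- continuous (fun x => @?f x ^ ?n) _ => apply (continuous_Rpow f n); continuous_t
 | |- continuous (fun x => x) _ => apply continuous_id
 | |- continuous (fun _ => ?c) _ => apply continuous_const
 | |- _ => eassumption
 end.

Lemma is_derive_continuous (f : R -> R) x l : is_derive f x l -> continuous f x.
Proof.
  intros H. apply (ex_derive_continuous (K := R_AbsRing) (V := R_NormedModule)). exists l; exact H.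
Qed.

Lemma is_derive_eq (f : R -> R) (x l l' : R) : is_derive f x l -> l = l' -> is_derive f x l'.
Proof. intros H <-; exact H. Qed.

Lemma locally_between a b x : a < x < b -> locally x (fun y => a < y < b).
Proof. intros Hx. apply (locally_interval _ x a b); simpl; intros; lra. Qed.

Lemma is_derive_ext_between (f g : R -> R) a b x l : a < x < b ->
  (forall y, a < y < b -> f y = g y) -> is_derive f x l -> is_derive g x l.
Proof.
  intros Hx E. apply is_derive_ext_loc.
  exact (filter_imp _ _ E (locally_between a b x Hx)).
Qed.

Lemma is_derive_zero_const F a b : (forall x, a < x < b -> is_derive F x 0) ->
  forall x y, a < x < b -> a < y < b -> F x = F y.
Proof.
  intros HF x y Hx Hy.
  assert (Hlo : a < Rmin x y) by (apply Rmin_glb_lt; lra).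
  assert (Hhi : Rmax x y < b) by (apply Rmax_lub_lt; lra).
  destruct (MVT_gen F x y (fun _ => 0)) as [c [_ E]].
  - intros z Hz. apply HF. lra.
  - intros z Hz. apply continuity_pt_filterlim, (is_derive_continuous F z 0), HF. lra.
  - lra.
Qed.

Lemma is_derive_zero_lim0 F Rs L : 0 < Rs -> (forall x, 0 < x < Rs -> is_derive F x 0) ->
  lim0 F L -> forall x, 0 < x < Rs -> F x = L.
Proof.
  intros HRs HF HL x Hx. apply (lim0_unique F); [|exact HL].
  apply (lim0_ext (fun _ => F x) F (F x) x); [lra| |apply lim0_const].
  intros y Hy. apply (is_derive_zero_const F 0 Rs HF); lra.
Qed.

Section PrimitiveFromCentre.
Variables (f : R -> R) (L Rs : R).
Hypothesis HRs : 0 < Rs.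
Hypothesis f_cont : forall r, 0 < r < Rs -> continuous f r.
Hypothesis f_lim0 : lim0 f L.

Lemma continuous_extension0 :
  exists h, (forall c, c < Rs -> continuous h c) /\ (forall c, 0 < c -> h c = f c).
Proof.
  destruct (C0_extension_left f L 0 Rs HRs f_cont f_lim0) as [h [Hc [Heq _]]].
  exists h. split; [exact Hc | exact Heq].
Qed.

Lemma RInt_from_centre_extension h : (forall c, c < Rs -> continuous h c) ->
  (forall c, 0 < c -> h c = f c) ->
  forall r, 0 <= r < Rs -> is_RInt f 0 r (RInt h 0 r).
Proof.
  intros Hc Heq r Hr.
  assert (Hh : ex_RInt h 0 r).
  { apply (ex_RInt_continuous (V := R_CompleteNormedModule)). intros z Hz.
    apply Hc. rewrite Rmax_right in Hz; lra. }
  assert (E : forall x, Rmin 0 r < x < Rmax 0 r -> h x = f x).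
  { intros x Hx. apply Heq. rewrite Rmin_left in Hx; lra. }
  rewrite (RInt_ext h f 0 r E). apply (RInt_correct (V := R_CompleteNormedModule)).
  exact (ex_RInt_ext h f 0 r E Hh).
Qed.

Lemma is_RInt_from_centre r : 0 <= r < Rs -> is_RInt f 0 r (RInt f 0 r).
Proof.
  intros Hr. destruct continuous_extension0 as [h [Hc Heq]].
  pose proof (RInt_from_centre_extension h Hc Heq r Hr) as H.
  rewrite (is_RInt_unique _ _ _ _ H). exact H.
Qed.

Lemma is_derive_RInt_from_centre r : 0 < r < Rs -> is_derive (fun x => RInt f 0 x) r (f r).
Proof.
  intros Hr. apply (is_derive_RInt f _ 0 r); [|apply f_cont; exact Hr].
  apply (filter_imp (fun y => 0 < y < Rs)); [|apply locally_between; exact Hr].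
  intros y Hy. apply is_RInt_from_centre. lra.
Qed.

Lemma RInt_from_centre_lim0 : lim0 (fun x => RInt f 0 x) 0.
Proof.
  destruct continuous_extension0 as [h [Hc Heq]].
  assert (Hd : is_derive (fun x => RInt h 0 x) 0 (h 0)).
  { apply (is_derive_RInt h _ 0 0); [|apply Hc; exact HRs].
    apply (filter_imp (fun y => -1 < y < Rs)); [|apply locally_between; lra].
    intros y Hy. apply (RInt_correct (V := R_CompleteNormedModule)).
    apply (ex_RInt_continuous (V := R_CompleteNormedModule)). intros z Hz. apply Hc.
    assert (Rmax 0 y < Rs) by (apply Rmax_lub_lt; lra). lra. }
  apply (lim0_ext (fun x => RInt h 0 x)) with (d := Rs); [exact HRs| |].
  - intros x Hx. symmetry.
    apply (is_RInt_unique _ _ _ _ (RInt_from_centre_extension h Hc Heq x ltac:(lra))).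
  - apply (lim0_eq _ (RInt h 0 0)); [|apply (RInt_point (V := R_CompleteNormedModule))].
    intros P HP. destruct (is_derive_continuous _ _ _ Hd P HP) as [e He].
    exists e. intros y Hy _. exact (He y Hy).
Qed.

End PrimitiveFromCentre.

Section Mass.
Variables (rho : R -> R) (Rs rc : R).
Hypothesis HRs : 0 < Rs.
Hypothesis rho_cont : forall r, 0 < r < Rs -> continuous rho r.
Hypothesis rho_lim0 : lim0 rho rc.

Let integrand s := s ^ 2 * rho s.

Let integrand_cont r : 0 < r < Rs -> continuous integrand r.
Proof. intros Hr. unfold integrand. pose proof (rho_cont r Hr). continuous_t. Qed.

Let integrand_lim0 : lim0 integrand 0.
Proof. unfold integrand. eapply lim0_eq; [lim0_t | ring]. Qed.

Lemma is_derive_mass r : 0 < r < Rs -> is_derive (mass rho) r (4 * PI * r ^ 2 * rho r).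
Proof.
  intros Hr. unfold mass. rewrite Rmult_assoc.
  apply (is_derive_scal (fun x => RInt integrand 0 x)).
  exact (is_derive_RInt_from_centre integrand 0 Rs HRs integrand_cont integrand_lim0 r Hr).
Qed.

Lemma mass_lim0 : lim0 (mass rho) 0.
Proof.
  pose proof (RInt_from_centre_lim0 integrand 0 Rs HRs integrand_cont integrand_lim0).
  unfold mass. eapply lim0_eq; [lim0_t | ring].
Qed.

Lemma mass_div_sqr_lim0 : lim0 (fun r => mass rho r / r ^ 2) 0.
Proof.
  destruct (lim0_bounded rho rc rho_lim0) as [d [Hd Hb]].
  pose proof PI_RGT_0.
  apply (lim0_squeeze _ (4 * PI * (Rabs rc + 1)) (Rmin d Rs)); [apply Rmin_pos; lra|].
  intros x Hx. pose proof (Rmin_l d Rs); pose proof (Rmin_r d Rs).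
  assert (Hbd : Rabs (RInt integrand 0 x) <= (x - 0) * (x ^ 2 * (Rabs rc + 1))).
  { apply abs_RInt_le_const; [lra| |].
    - eexists. apply (is_RInt_from_centre integrand 0 Rs HRs integrand_cont integrand_lim0). lra.
    - intros t Ht. unfold integrand. rewrite Rabs_mult, Rabs_right by (apply Rle_ge, pow2_ge_0).
      destruct (Req_dec t 0) as [->|Ht0].
      + pose proof (Rabs_pos (rho 0)). pose proof (Rabs_pos rc). simpl. nra.
      + apply Rmult_le_compat; [apply pow2_ge_0 | apply Rabs_pos | apply pow_incr; lra |].
        apply Hb. lra. }
  assert (Hx2 : 0 < x ^ 2) by (apply pow_lt; lra).
  unfold mass. rewrite Rabs_div by lra.
  rewrite Rabs_mult, (Rabs_right (4 * PI)), (Rabs_right (x ^ 2)) by lra.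
  apply (Rmult_le_reg_r (x ^ 2)); [exact Hx2|].
  unfold Rdiv. rewrite Rmult_assoc, Rinv_l, Rmult_1_r by lra. fold integrand.
  replace (4 * PI * (Rabs rc + 1) * x * x ^ 2)
    with (4 * PI * ((x - 0) * (x ^ 2 * (Rabs rc + 1)))) by ring.
  apply Rmult_le_compat_l; lra.
Qed.

End Mass.

Lemma r_sub_2m_neq0 r M : 0 < r -> 1 - 2 * M / r <> 0 -> r - 2 * M <> 0.
Proof.
  intros Hr Hq E. apply Hq. replace (1 - 2 * M / r) with ((r - 2 * M) / r) by (field; lra).
  rewrite E. unfold Rdiv; ring.
Qed.

Ltac nonzero_t := repeat match goal with
  | |- _ * _ <> 0 => apply Rmult_integral_contrapositive_currified
  | |- _ ^ _ <> 0 => apply pow_nonzero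
  end.

Ltac rewrite_Derive H := match type of H with is_derive ?f ?x ?l =>
  replace (Derive (fun y => f y) x) with l by (symmetry; apply is_derive_unique; exact H) end.

(* g' along a solution of the TOV system, expressed through m, p, rho and g itself. *)
Definition dgfun (m p rho : R -> R) (x : R) : R :=
  let g := gfun m p x in
  (4 * PI * x ^ 2 * rho x + 4 * PI * (- (rho x + p x) * g * x ^ 3 + p x * 3 * x ^ 2)
   - g * (2 * x * (1 - 2 * m x / x) - 8 * PI * x ^ 3 * rho x + 2 * m x))
  / (x ^ 2 * (1 - 2 * m x / x)).

Lemma is_derive_gfun (m p rho : R -> R) r :
  0 < r -> 1 - 2 * m r / r <> 0 ->
  is_derive m r (4 * PI * r ^ 2 * rho r) ->
  is_derive p r (- (rho r + p r) * gfun m p r) ->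
  is_derive (gfun m p) r (dgfun m p rho r).
Proof.
  intros Hr Hq Hm Hp. pose proof (r_sub_2m_neq0 r (m r) Hr Hq). unfold gfun at 1.
  auto_derive.
  - repeat split; try (eexists; eassumption); try lra.
    apply Rmult_integral_contrapositive_currified; [nra | lra].
  - rewrite_Derive Hm. rewrite_Derive Hp. unfold dgfun, gfun. field. lra.
Qed.

Definition pressure_shift (G D r : R) : R := - D * (1 + 2 * r * G) / (4 * PI * r ^ 3).

Lemma gfun_shift (m p D : R -> R) r : 0 < r ->
  1 - 2 * m r / r <> 0 -> 1 - 2 * (m r + D r) / r <> 0 ->
  gfun (fun x => m x + D x) (fun x => p x + pressure_shift (gfun m p x) (D x) x) r = gfun m p r.
Proof.
  intros Hr Hq HqD. pose proof (r_sub_2m_neq0 r _ Hr Hq). pose proof (r_sub_2m_neq0 r _ Hr HqD).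
  pose proof PI_RGT_0. unfold gfun, pressure_shift. field. repeat split; lra.
Qed.

Lemma gfun_eq_shift (m p m' p' : R -> R) r : 0 < r ->
  1 - 2 * m r / r <> 0 -> 1 - 2 * m' r / r <> 0 -> gfun m' p' r = gfun m p r ->
  p' r = p r + pressure_shift (gfun m p r) (m' r - m r) r.
Proof.
  intros Hr Hq Hq' E. pose proof (r_sub_2m_neq0 r _ Hr Hq). pose proof (r_sub_2m_neq0 r _ Hr Hq').
  pose proof PI_RGT_0. unfold pressure_shift. set (G := gfun m p r) in *.
  assert (E' : m' r + 4 * PI * p' r * r ^ 3 = G * (r ^ 2 * (1 - 2 * m' r / r))).
  { rewrite <- E. unfold gfun. field. split; lra. }
  assert (E0 : m r + 4 * PI * p r * r ^ 3 = G * (r ^ 2 * (1 - 2 * m r / r))).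
  { unfold G, gfun. field. split; lra. }
  replace (p' r) with ((G * (r ^ 2 * (1 - 2 * m' r / r)) - m' r) / (4 * PI * r ^ 3))
    by (rewrite <- E'; field; lra).
  replace (p r) with ((G * (r ^ 2 * (1 - 2 * m r / r)) - m r) / (4 * PI * r ^ 3))
    by (rewrite <- E0; field; lra).
  field. lra.
Qed.

Lemma dpres_pressure_shift (m0 p0 : R -> R) drc r : 0 < r -> 1 - 2 * m0 r / r <> 0 ->
  dpres m0 p0 drc r = pressure_shift (gfun m0 p0 r) (dmass m0 p0 drc r) r.
Proof.
  intros Hr Hq. pose proof (r_sub_2m_neq0 r _ Hr Hq). pose proof PI_RGT_0.
  unfold dpres, pressure_shift, gfun. field. repeat split; lra.
Qed.

Lemma dpres_explicit (m0 p0 : R -> R) drc r : 0 < r ->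
  1 - 2 * m0 r / r <> 0 -> 1 + r * gfun m0 p0 r <> 0 ->
  dpres m0 p0 drc r = (- drc / 3) / (1 + r * gfun m0 p0 r) ^ 2
    * ((1 + 8 * PI * p0 r * r ^ 2) / (1 - 2 * m0 r / r)) * expfac (gfun m0 p0) r.
Proof.
  intros Hr Hq Hd. pose proof (r_sub_2m_neq0 r _ Hr Hq). pose proof PI_RGT_0.
  unfold dpres, dmass. field. repeat split; lra.
Qed.

Definition dmass_rate (G dG r : R) : R := 3 / r - 2 * r * (dG + G ^ 2) / (1 + r * G).

Lemma is_derive_dmass_profile (G I : R -> R) (r dG drc : R) : 0 < r -> 1 + r * G r <> 0 ->
  is_derive G r dG -> is_derive I r (G r * (1 - r * G r) / (1 + r * G r)) ->
  is_derive (fun x => 4 * PI * x ^ 3 * drc / (3 * (1 + x * G x) ^ 2) * exp (2 * I x)) r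
    (dmass_rate (G r) dG r * (4 * PI * r ^ 3 * drc / (3 * (1 + r * G r) ^ 2) * exp (2 * I r))).
Proof.
  intros Hr Hd HG HI. auto_derive.
  - repeat split; try (eexists; eassumption).
    rewrite Rmult_1_r. nonzero_t; lra.
  - rewrite_Derive HG. rewrite_Derive HI. unfold dmass_rate. field. lra.
Qed.

Lemma is_derive_pressure_shift (G D : R -> R) (r dG dD : R) : 0 < r -> 1 + r * G r <> 0 ->
  is_derive G r dG -> is_derive D r dD ->
  is_derive (fun x => pressure_shift (G x) (D x) x) r
    (- (dD / (4 * PI * r ^ 2) + pressure_shift (G r) (D r) r) * G r
     - (1 + r * G r) / (4 * PI * r ^ 3) * (dD - dmass_rate (G r) dG r * D r)).
Proof.
  intros Hr Hd HG HD. pose proof PI_RGT_0. unfold pressure_shift. auto_derive.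
  - repeat split; try (eexists; eassumption).
    nonzero_t; lra.
  - rewrite_Derive HG. rewrite_Derive HD. unfold dmass_rate. field. lra.
Qed.

Lemma dmass_linear (m0 p0 : R -> R) drc r : dmass m0 p0 drc r = drc * dmass m0 p0 1 r.
Proof. unfold dmass, Rdiv. ring. Qed.

Section Background.
Variables (Rs : R) (rho0 p0 : R -> R) (rhoc0 pc0 : R).
Hypothesis HRs : 0 < Rs.
Hypothesis background : TOV_regular Rs rho0 p0 rhoc0 pc0.
Hypothesis one_add_rg0_pos : forall r, 0 <= r < Rs -> 1 + r * gfun (mass rho0) p0 r > 0.

Let rho0_cont : forall r, 0 < r < Rs -> continuous rho0 r := proj1 background.
Let rho0_lim0 : lim0 rho0 rhoc0 := proj1 (proj2 background).
Let p0_lim0 : lim0 p0 pc0 := proj1 (proj2 (proj2 background)).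
Let m0_subcritical : forall r, 0 < r < Rs -> 1 - 2 * mass rho0 r / r > 0 :=
  proj1 (proj2 (proj2 (proj2 background))).
Let p0_tov : forall r, 0 < r < Rs ->
  is_derive p0 r (- (rho0 r + p0 r) * gfun (mass rho0) p0 r) :=
  proj2 (proj2 (proj2 (proj2 background))).

Local Notation m0 := (mass rho0).
Local Notation g := (gfun (mass rho0) p0).
Local Notation dg := (dgfun (mass rho0) p0 rho0).
Local Notation kappa := (fun s => gfun (mass rho0) p0 s * (1 - s * gfun (mass rho0) p0 s)
                                   / (1 + s * gfun (mass rho0) p0 s)).

Lemma background_neq0 r : 0 < r < Rs ->
  1 - 2 * m0 r / r <> 0 /\ r - 2 * m0 r <> 0 /\ 1 + r * g r <> 0.
Proof.
  intros Hr. pose proof (m0_subcritical r Hr). pose proof (one_add_rg0_pos r ltac:(lra)).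
  split; [lra | split; [apply r_sub_2m_neq0; lra | lra]].
Qed.

Ltac background_facts r :=
  let Hr := fresh "Hr" in assert (Hr : 0 < r < Rs) by lra;
  destruct (background_neq0 r Hr) as [Hq [Hs Hd]]; clear Hr; pose proof PI_RGT_0.

Lemma is_derive_m0 r : 0 < r < Rs -> is_derive m0 r (4 * PI * r ^ 2 * rho0 r).
Proof. apply (is_derive_mass rho0 Rs rhoc0 HRs rho0_cont rho0_lim0). Qed.

Lemma is_derive_g r : 0 < r < Rs -> is_derive g r (dg r).
Proof.
  intros Hr. background_facts r.
  apply is_derive_gfun; [lra | exact Hq | apply is_derive_m0 | apply p0_tov]; exact Hr.
Qed.

Lemma g_lim0 : lim0 g 0.
Proof.
  pose proof (mass_div_sqr_lim0 rho0 Rs rhoc0 HRs rho0_cont rho0_lim0).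
  apply (lim0_ext (fun x => (m0 x / x ^ 2 + 4 * PI * p0 x * x) / (1 - 2 * (m0 x / x ^ 2) * x)))
    with (d := Rs); [exact HRs| |].
  - intros x Hx. background_facts x. unfold gfun. field. lra.
  - eapply lim0_eq; [lim0_t; lra | field; lra].
Qed.

Lemma sqr_dg_lim0 : lim0 (fun x => x ^ 2 * dg x) 0.
Proof.
  pose proof (mass_div_sqr_lim0 rho0 Rs rhoc0 HRs rho0_cont rho0_lim0). pose proof g_lim0.
  apply (lim0_ext (fun x =>
    (4 * PI * x ^ 2 * rho0 x + 4 * PI * (- (rho0 x + p0 x) * g x * x ^ 3 + p0 x * 3 * x ^ 2)
     - g x * (2 * x * (1 - 2 * (m0 x / x ^ 2) * x) - 8 * PI * x ^ 3 * rho0 x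
              + 2 * ((m0 x / x ^ 2) * x ^ 2)))
    / (1 - 2 * (m0 x / x ^ 2) * x))) with (d := Rs); [exact HRs| |].
  - intros x Hx. background_facts x. unfold dgfun. cbv zeta. field. lra.
  - eapply lim0_eq; [lim0_t; lra | field; lra].
Qed.

Lemma kappa_cont r : 0 < r < Rs -> continuous kappa r.
Proof.
  intros Hr. background_facts r. pose proof (is_derive_continuous _ _ _ (is_derive_g r Hr)).
  continuous_t. exact Hd.
Qed.

Lemma kappa_lim0 : lim0 kappa 0.
Proof. pose proof g_lim0. eapply lim0_eq; [lim0_t; lra | field; lra]. Qed.

Lemma expfac_lim0 : lim0 (expfac g) 1.
Proof.
  pose proof (RInt_from_centre_lim0 kappa 0 Rs HRs kappa_cont kappa_lim0).
  unfold expfac. eapply lim0_eq; [lim0_t | rewrite Rmult_0_r; apply exp_0].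
Qed.

Lemma is_derive_dmass drc r : 0 < r < Rs ->
  is_derive (dmass m0 p0 drc) r (dmass_rate (g r) (dg r) r * dmass m0 p0 drc r).
Proof.
  intros Hr. background_facts r. unfold dmass, expfac.
  apply (is_derive_dmass_profile g (fun x => RInt kappa 0 x)); [lra | exact Hd | |].
  - exact (is_derive_g r Hr).
  - exact (is_derive_RInt_from_centre kappa 0 Rs HRs kappa_cont kappa_lim0 r Hr).
Qed.

Lemma dmass1_pos r : 0 < r < Rs -> 0 < dmass m0 p0 1 r.
Proof.
  intros Hr. pose proof (one_add_rg0_pos r ltac:(lra)). pose proof PI_RGT_0.
  unfold dmass. apply Rmult_lt_0_compat; [|apply exp_pos].
  apply Rdiv_lt_0_compat; [|apply Rmult_lt_0_compat; [lra | apply pow_lt; lra]].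
  pose proof (pow_lt r 3 ltac:(lra)). nra.
Qed.

Lemma is_derive_p0_shift (D : R -> R) r dD : 0 < r < Rs -> is_derive D r dD ->
  is_derive (fun x => p0 x + pressure_shift (g x) (D x) x) r
    (- ((rho0 r + dD / (4 * PI * r ^ 2)) + (p0 r + pressure_shift (g r) (D r) r)) * g r
     - (1 + r * g r) / (4 * PI * r ^ 3) * (dD - dmass_rate (g r) (dg r) r * D r)).
Proof.
  intros Hr HD. background_facts r.
  eapply is_derive_eq.
  - apply (is_derive_plus p0 (fun x => pressure_shift (g x) (D x) x)); [exact (p0_tov r Hr)|].
    apply is_derive_pressure_shift; [lra | exact Hd | exact (is_derive_g r Hr) | exact HD].
  - unfold plus; simpl. ring.
Qed.

Section Perturbation.
Variable drc : R.
Local Notation dm := (dmass (mass rho0) p0 drc).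
Local Notation mp := (mpert (mass rho0) p0 drc).
Local Notation rp := (rhopert (mass rho0) p0 drc).
Local Notation pp := (ppert (mass rho0) p0 drc).

Lemma is_derive_mpert r : 0 < r < Rs ->
  is_derive mp r (4 * PI * r ^ 2 * rho0 r + dmass_rate (g r) (dg r) r * dm r).
Proof.
  intros Hr. apply (is_derive_plus m0 dm); [apply is_derive_m0 | apply is_derive_dmass]; exact Hr.
Qed.

Lemma rhopert_eq r : 0 < r < Rs ->
  rp r = rho0 r + dmass_rate (g r) (dg r) r * dm r / (4 * PI * r ^ 2).
Proof.
  intros Hr. unfold rhopert. rewrite (is_derive_unique _ _ _ (is_derive_mpert r Hr)).
  background_facts r. field. lra.
Qed.

Lemma ppert_eq r : 0 < r < Rs -> pp r = p0 r + pressure_shift (g r) (dm r) r.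
Proof.
  intros Hr. background_facts r. unfold ppert.
  rewrite dpres_pressure_shift by (lra || exact Hq). reflexivity.
Qed.

Lemma rhopert_cont r : 0 < r < Rs -> continuous rp r.
Proof.
  intros Hr.
  apply (continuous_ext_loc _
    (fun x => rho0 x + dmass_rate (g x) (dg x) x * dm x / (4 * PI * x ^ 2))).
  { apply (filter_imp (fun y => 0 < y < Rs)); [|apply locally_between; exact Hr].
    intros y Hy. symmetry; apply rhopert_eq; exact Hy. }
  pose proof (rho0_cont r Hr).
  pose proof (is_derive_continuous _ _ _ (is_derive_m0 r Hr)).
  pose proof (is_derive_continuous _ _ _ (p0_tov r Hr)).
  pose proof (is_derive_continuous _ _ _ (is_derive_g r Hr)).
  pose proof (is_derive_continuous _ _ _ (is_derive_dmass drc r Hr)).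
  background_facts r. unfold dmass_rate, dgfun. cbv zeta.
  continuous_t; nonzero_t; lra.
Qed.

Lemma rhopert_lim0 : lim0 rp (rhoc0 + drc).
Proof.
  pose proof g_lim0. pose proof expfac_lim0. pose proof sqr_dg_lim0.
  apply (lim0_ext (fun x => rho0 x + drc * expfac g x / (1 + x * g x) ^ 2
     * (1 - 2 * (x ^ 2 * dg x + (x * g x) ^ 2) / (3 * (1 + x * g x))))) with (d := Rs);
    [exact HRs| |].
  - intros x Hx. rewrite rhopert_eq by exact Hx. background_facts x.
    unfold dmass_rate, dmass. field. lra.
  - eapply lim0_eq; [lim0_t; simpl; lra | field].
Qed.

Lemma ppert_lim0 : lim0 pp (pc0 + - drc / 3).
Proof.
  pose proof g_lim0. pose proof expfac_lim0.
  pose proof (mass_div_sqr_lim0 rho0 Rs rhoc0 HRs rho0_cont rho0_lim0).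
  apply (lim0_ext (fun x => p0 x + (- drc / 3) / (1 + x * g x) ^ 2
        * ((1 + 8 * PI * p0 x * x ^ 2) / (1 - 2 * (m0 x / x ^ 2) * x)) * expfac g x))
    with (d := Rs); [exact HRs| |].
  - intros x Hx. background_facts x. unfold ppert.
    rewrite dpres_explicit by (lra || assumption). field. lra.
  - eapply lim0_eq; [lim0_t; simpl; lra | field].
Qed.

Lemma mpert_lim0 : lim0 mp 0.
Proof.
  pose proof g_lim0. pose proof expfac_lim0.
  pose proof (mass_div_sqr_lim0 rho0 Rs rhoc0 HRs rho0_cont rho0_lim0).
  apply (lim0_ext (fun x => (m0 x / x ^ 2) * x ^ 2
    + 4 * PI * x ^ 3 * drc / (3 * (1 + x * g x) ^ 2) * expfac g x)) with (d := Rs); [exact HRs| |].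
  - intros x Hx. background_facts x. unfold mpert, dmass. field. lra.
  - eapply lim0_eq; [lim0_t; simpl; lra | field].
Qed.

Lemma mass_rhopert r : 0 < r < Rs -> mass rp r = mp r.
Proof.
  intros Hr. apply Rminus_diag_uniq.
  apply (is_derive_zero_lim0 (fun x => mass rp x - mp x) Rs 0 HRs); [| |exact Hr].
  - intros x Hx. eapply is_derive_eq.
    + apply (is_derive_minus (mass rp) mp); [|exact (is_derive_mpert x Hx)].
      exact (is_derive_mass rp Rs (rhoc0 + drc) HRs rhopert_cont rhopert_lim0 x Hx).
    + unfold minus, plus, opp; simpl. rewrite (rhopert_eq x Hx). background_facts x. field. lra.
  - replace 0 with (0 - 0) by ring. apply lim0_minus; [|exact mpert_lim0].
    exact (mass_lim0 rp Rs (rhoc0 + drc) HRs rhopert_cont rhopert_lim0).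
Qed.

Lemma ppert_tov r : 0 < r < Rs -> is_derive pp r (- (rp r + pp r) * g r).
Proof.
  intros Hr. background_facts r.
  apply (is_derive_ext_between (fun x => p0 x + pressure_shift (g x) (dm x) x) pp 0 Rs r _ Hr).
  { intros y Hy. symmetry; exact (ppert_eq y Hy). }
  eapply is_derive_eq; [exact (is_derive_p0_shift _ r _ Hr (is_derive_dmass drc r Hr))|].
  rewrite rhopert_eq, ppert_eq by exact Hr. field. lra.
Qed.

Lemma gfun_perturbed r : 0 < r < Rs -> 1 - 2 * mp r / r > 0 -> gfun mp pp r = g r.
Proof.
  intros Hr Hmp. background_facts r.
  rewrite <- (gfun_shift m0 p0 dm r) by (lra || exact Hq || (unfold mpert in Hmp; lra)).
  unfold gfun. rewrite (ppert_eq r Hr). reflexivity.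
Qed.

End Perturbation.

Section Converse.
Variables (Rs' : R) (rho p : R -> R) (rhoc pc : R).
Hypothesis HRs' : 0 < Rs' <= Rs.
Hypothesis tov : TOV_regular Rs' rho p rhoc pc.
Hypothesis same_g : forall r, 0 < r < Rs' -> gfun (mass rho) p r = g r.

Lemma is_derive_mass_diff r : 0 < r < Rs' ->
  is_derive (fun x => mass rho x - m0 x) r (4 * PI * r ^ 2 * (rho r - rho0 r)).
Proof.
  intros Hr. destruct tov as [rho_cont [rho_lim0 _]]. eapply is_derive_eq.
  - apply (is_derive_minus (mass rho) m0).
    + exact (is_derive_mass rho Rs' rhoc ltac:(lra) rho_cont rho_lim0 r Hr).
    + apply is_derive_m0. lra.
  - unfold minus, plus, opp; simpl. ring.
Qed.

Lemma pressure_eq_shift r : 0 < r < Rs' ->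
  p r = p0 r + pressure_shift (g r) (mass rho r - m0 r) r.
Proof.
  intros Hr. destruct tov as [_ [_ [_ [subcritical _]]]].
  background_facts r. pose proof (subcritical r Hr).
  apply gfun_eq_shift; [lra | exact Hq | lra | exact (same_g r Hr)].
Qed.

Lemma mass_diff_ode r : 0 < r < Rs' ->
  4 * PI * r ^ 2 * (rho r - rho0 r) = dmass_rate (g r) (dg r) r * (mass rho r - m0 r).
Proof.
  intros Hr. destruct tov as [_ [_ [_ [_ p_tov]]]]. background_facts r.
  set (dD := 4 * PI * r ^ 2 * (rho r - rho0 r)).
  assert (Hshift : is_derive p r
    (- ((rho0 r + dD / (4 * PI * r ^ 2))
        + (p0 r + pressure_shift (g r) (mass rho r - m0 r) r)) * g r
     - (1 + r * g r) / (4 * PI * r ^ 3) * (dD - dmass_rate (g r) (dg r) r * (mass rho r - m0 r)))).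
  { apply (is_derive_ext_between (fun x => p0 x + pressure_shift (g x) (mass rho x - m0 x) x)
      p 0 Rs' r _ Hr); [intros y Hy; symmetry; exact (pressure_eq_shift y Hy)|].
    exact (is_derive_p0_shift _ r dD ltac:(lra) (is_derive_mass_diff r Hr)). }
  pose proof (is_derive_unique _ _ _ Hshift) as E.
  rewrite (is_derive_unique _ _ _ (p_tov r Hr)), (same_g r Hr), <- (pressure_eq_shift r Hr) in E.
  replace (rho0 r + dD / (4 * PI * r ^ 2)) with (rho r) in E by (unfold dD; field; lra).
  assert (Hfac : (1 + r * g r) / (4 * PI * r ^ 3) <> 0).
  { unfold Rdiv. nonzero_t; [exact Hd | apply Rinv_neq_0_compat; nonzero_t; lra]. }
  apply Rminus_diag_uniq, (Rmult_eq_reg_l ((1 + r * g r) / (4 * PI * r ^ 3))); [|exact Hfac].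
  rewrite Rmult_0_r. lra.
Qed.

Lemma mass_diff_dmass : exists drc, forall r, 0 < r < Rs' -> mass rho r - m0 r = dmass m0 p0 drc r.
Proof.
  set (F := fun x => (mass rho x - m0 x) / dmass m0 p0 1 x).
  assert (F' : forall x, 0 < x < Rs' -> is_derive F x 0).
  { intros x Hx. pose proof (dmass1_pos x ltac:(lra)).
    eapply is_derive_eq.
    - apply is_derive_div; [exact (is_derive_mass_diff x Hx) | apply is_derive_dmass; lra | lra].
    - rewrite (mass_diff_ode x Hx). field. lra. }
  exists (F (Rs' / 2)). intros r Hr. background_facts r. pose proof (dmass1_pos r ltac:(lra)).
  rewrite (dmass_linear m0 p0 _ r), <- (is_derive_zero_const F 0 Rs' F' r) by lra.
  unfold F. field. lra.
Qed.

Lemma perturbation_of_same_g :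
  exists drc, forall r, 0 < r < Rs' ->
    rho r = rhopert m0 p0 drc r /\ p r = ppert m0 p0 drc r.
Proof.
  destruct mass_diff_dmass as [drc Hdm]. destruct tov as [rho_cont [rho_lim0 _]].
  exists drc. intros r Hr. background_facts r. split.
  - assert (Hmp : is_derive (mpert m0 p0 drc) r (4 * PI * r ^ 2 * rho r)).
    { apply (is_derive_ext_between (mass rho) _ 0 Rs' r _ Hr).
      - intros y Hy. unfold mpert. rewrite <- (Hdm y Hy). ring.
      - exact (is_derive_mass rho Rs' rhoc ltac:(lra) rho_cont rho_lim0 r Hr). }
    unfold rhopert. rewrite (is_derive_unique _ _ _ Hmp). field. lra.
  - rewrite (ppert_eq drc r ltac:(lra)), <- (Hdm r Hr). exact (pressure_eq_shift r Hr).
Qed.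

End Converse.

Lemma tov_perturbed drc Rs' : 0 < Rs' <= Rs ->
  (forall r, 0 < r < Rs' -> 1 - 2 * mpert m0 p0 drc r / r > 0) ->
  TOV_regular Rs' (rhopert m0 p0 drc) (ppert m0 p0 drc) (rhoc0 + drc) (pc0 + - drc / 3) /\
  (forall r, 0 < r < Rs' -> mass (rhopert m0 p0 drc) r = mpert m0 p0 drc r) /\
  (forall r, 0 < r < Rs' -> gfun (mpert m0 p0 drc) (ppert m0 p0 drc) r = g r).
Proof.
  intros HRs' Hsub.
  assert (Hmass : forall r, 0 < r < Rs' -> mass (rhopert m0 p0 drc) r = mpert m0 p0 drc r).
  { intros r Hr. apply mass_rhopert. lra. }
  assert (Hg : forall r, 0 < r < Rs' -> gfun (mpert m0 p0 drc) (ppert m0 p0 drc) r = g r).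
  { intros r Hr. apply gfun_perturbed; [lra | exact (Hsub r Hr)]. }
  split; [|split; assumption].
  split; [|split; [|split; [|split]]].
  - intros r Hr. apply rhopert_cont. lra.
  - apply rhopert_lim0.
  - apply ppert_lim0.
  - intros r Hr. rewrite Hmass by exact Hr. exact (Hsub r Hr).
  - intros r Hr.
    replace (gfun (mass (rhopert m0 p0 drc)) (ppert m0 p0 drc) r) with (g r).
    + apply ppert_tov. lra.
    + rewrite <- (Hg r Hr). unfold gfun. rewrite Hmass by exact Hr. reflexivity.
Qed.

End Background.

Theorem theoremP2 (Rs : R) (rho0 p0 : R -> R) (rhoc0 pc0 : R) :
  0 < Rs ->
  TOV_regular Rs rho0 p0 rhoc0 pc0 ->
  (forall r, 0 <= r < Rs -> 1 + r * gfun (mass rho0) p0 r > 0) ->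
  (* forward direction *)
  (forall drc : R,
     (* explicit form of delta p, with delta p_c = - delta rho_c / 3 *)
     (forall r, 0 < r < Rs ->
        dpres (mass rho0) p0 drc r =
        (- drc / 3) / (1 + r * gfun (mass rho0) p0 r) ^ 2
        * ((1 + 8 * PI * p0 r * r ^ 2) / (1 - 2 * mass rho0 r / r))
        * expfac (gfun (mass rho0) p0) r) /\
     (forall Rs' : R, 0 < Rs' <= Rs ->
        (forall r, 0 < r < Rs' ->
           1 - 2 * mpert (mass rho0) p0 drc r / r > 0) ->
        TOV_regular Rs' (rhopert (mass rho0) p0 drc) (ppert (mass rho0) p0 drc)
          (rhoc0 + drc) (pc0 + (- drc / 3)) /\
        (forall r, 0 < r < Rs' ->
           mass (rhopert (mass rho0) p0 drc) r = mpert (mass rho0) p0 drc r) /\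
        (forall r, 0 < r < Rs' ->
           gfun (mpert (mass rho0) p0 drc) (ppert (mass rho0) p0 drc) r
           = gfun (mass rho0) p0 r))) /\
  (* converse *)
  (forall (Rs' : R) (rho p : R -> R) (rhoc pc : R),
     0 < Rs' <= Rs ->
     TOV_regular Rs' rho p rhoc pc ->
     (forall r, 0 < r < Rs' -> gfun (mass rho) p r = gfun (mass rho0) p0 r) ->
     exists drc : R,
       forall r, 0 < r < Rs' ->
         rho r = rhopert (mass rho0) p0 drc r /\
         p r = ppert (mass rho0) p0 drc r).
Proof.
  intros HRs background Hpos. split.
  - intros drc. split.
    + intros r Hr.
      destruct (background_neq0 Rs rho0 p0 rhoc0 pc0 background Hpos r Hr) as [Hq [_ Hd]].
      apply dpres_explicit; [lra | exact Hq | exact Hd].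
    + exact (tov_perturbed Rs rho0 p0 rhoc0 pc0 HRs background Hpos drc).
  - exact (perturbation_of_same_g Rs rho0 p0 rhoc0 pc0 HRs background Hpos).
Qed.
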